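(* Let $(G,\omega,\mu)$ be an infinite, connected, locally finite weighted graph, let $V:G\to\mathbb{R}$, and let $u:G\to\mathbb{R}$ be a solution of $\Delta u - Vu=0$ in $G$. Let $\eta,\xi:G\to\mathbb{R}$ satisfy: $\eta\ge0$ with finite support, and $$[\eta^2(y)-\eta^2(x)]\,[e^{\xi(y)}-e^{\xi(x)}]\ge0\quad\text{for all }x,y\in G\text{ with }x\sim y.$$ Then for any $p\ge2$, $$\frac12\sum_{x\in G}|u(x)|^p\eta^2(x)e^{\xi(x)}\Big\{V(x)\,p\,\mu(x)-\frac12\sum_{y\in G}\omega(x,y)\big[1-e^{\xi(y)-\xi(x)}\big]^2\Big\}\le\sum_{x,y\in G}|u(x)|^p e^{\xi(y)}[\eta(y)-\eta(x)]^2\omega(x,y).$$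
   Context: A weighted graph $(G,\omega,\mu)$: $G$ countable, $\mu:G\to(0,\infty)$, $\omega:G\times G\to[0,\infty)$ symmetric with $\omega(x,x)=0$ and $\sum_y\omega(x,y)<\infty$; $x\sim y$ iff $\omega(x,y)>0$; locally finite means each vertex has finitely many neighbours; connected means any two vertices are joined by a finite path. Laplacian $\Delta f(x)=\frac{1}{\mu(x)}\sum_{y}[f(y)-f(x)]\omega(x,y)$. *)

From HB Require Import structures.
From mathcomp Require Import all_boot all_order all_algebra.
From mathcomp Require Import all_classical all_reals all_analysis.
Set Implicit Arguments. Unset Strict Implicit. Unset Printing Implicit Defensive.
Import Order.TTheory GRing.Theory Num.Theory.
Local Open Scope classical_set_scope.
Local Open Scope ring_scope.

Definition weighted_graph (R : realType) (T : countType)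
  (omega : T -> T -> R) (mu : T -> R) : Prop :=
  (forall x, 0 < mu x) /\
  (forall x y, 0 <= omega x y) /\
  (forall x y, omega x y = omega y x) /\
  (forall x, omega x x = 0).

Definition adj (R : realType) (T : Type) (omega : T -> T -> R) (x y : T) : Prop :=
  0 < omega x y.

Definition locally_finite (R : realType) (T : Type) (omega : T -> T -> R) : Prop :=
  forall x, finite_set [set y | adj omega x y].

Definition connected_graph (R : realType) (T : Type) (omega : T -> T -> R) : Prop :=
  forall x y, exists (n : nat) (f : nat -> T),
    f 0%N = x /\ f n = y /\ (forall i, (i < n)%N -> adj omega (f i) (f i.+1)).

(* Laplacian: Delta f(x) = 1/mu(x) * sum_y [f(y) - f(x)] omega(x,y);
   the sum is a finitely supported sum (fsbigop), finite by local finiteness. *)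
Definition laplacian (R : realType) (T : countType) (omega : T -> T -> R)
  (mu : T -> R) (f : T -> R) (x : T) : R :=
  (mu x)^-1 * \sum_(y \in [set: T]) (f y - f x) * omega x y.

From HB Require Import structures.
From mathcomp Require Import all_boot all_order all_algebra.
From mathcomp Require Import all_classical all_reals all_analysis.
From mathcomp Require Import ring lra.

Set Implicit Arguments. Unset Strict Implicit. Unset Printing Implicit Defensive.
Import Order.TTheory GRing.Theory Num.Theory.
Local Open Scope classical_set_scope.
Local Open Scope ring_scope.

(* Multiplying [Delta u = V u] at x by [p |u x|^(p-2) u x eta(x)^2 e^xi(x)]
   and summing over x turns the left-hand side into a sum over oriented edges.
   Grouping each edge with its reverse reduces the claim to an inequality
   between the values of u, eta and e^xi at two vertices ([pair_defect_sym_le0]).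
   Young's inequality with exponents p/2 and p/(p-2) bounds the increment of
   |u|^(p-2) u by one of |u|^(p/2), and what remains is a quadratic form in
   (|u x|^(p/2), |u y|^(p/2)) whose discriminant has an explicit sum-of-squares
   certificate. *)

Section PairQuadraticBound.
Variable R : realFieldType.
Implicit Types a b c e f x y z w A B X Y : R.

Lemma quadratic_form_ge0 a b c X Y : 0 <= a -> 0 <= c -> b ^+ 2 <= a * c ->
  0 <= a * X ^+ 2 - 2 * b * X * Y + c * Y ^+ 2.
Proof.
move=> a_ge0 c_ge0 disc; have [a0|a_neq0] := eqVneq a 0.
  have b0 : b = 0 by apply/eqP; rewrite -sqrf_eq0 eq_le sqr_ge0 andbT -(mul0r c) -a0.
  by rewrite a0 b0; have := sqr_ge0 Y; nra.
have a_gt0 : 0 < a by rewrite lt_neqAle eq_sym a_neq0.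
rewrite -(pmulr_rge0 _ a_gt0).
have -> : a * (a * X ^+ 2 - 2 * b * X * Y + c * Y ^+ 2)
    = (a * X - b * Y) ^+ 2 + (a * c - b ^+ 2) * Y ^+ 2 by ring.
by rewrite addr_ge0 ?sqr_ge0 // mulr_ge0 ?sqr_ge0 ?subr_ge0.
Qed.

(* Three positive semidefinite forms; their nonnegative combination below is an
   SOS certificate for the discriminant in [pair_quadratic_bound]. *)
Lemma psd_form3_ge0 x y z :
  0 <= 60*x^+2 - 34*x*y - 84*x*z + 534*y^+2 - 488*y*z + 180*z^+2.
Proof.
have := sqr_ge0 (4*x - y - 3*z); have := sqr_ge0 (2*y - z).
have := sqr_ge0 x; have := sqr_ge0 y; have := sqr_ge0 z.
have := sqr_ge0 (x - y); have := sqr_ge0 (x - z); have := sqr_ge0 (y - z).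
nra.
Qed.

Lemma psd_form4_ge0 x y z w : 0 <= 144*x^+2 + 1350*y^+2 + 1386*z^+2 + 144*w^+2
  + 438*x*y - 642*x*z - 72*x*w - 1216*y*z - 612*y*w + 396*z*w.
Proof.
have := sqr_ge0 (48*x + 73*y - 107*z - 12*w).
have := sqr_ge0 (8*y - z - 2*w); have := sqr_ge0 (7*z + w).
have := sqr_ge0 w; have := sqr_ge0 z; have := sqr_ge0 y.
have := sqr_ge0 (y - z); have := sqr_ge0 (y - w); have := sqr_ge0 (z + w).
nra.
Qed.

Lemma psd_form2_ge0 x y : 0 <= 33*x^+2 + 50*x*y + 32*y^+2.
Proof. have := sqr_ge0 (x + y); have := sqr_ge0 x; have := sqr_ge0 y; nra. Qed.

Lemma pair_discriminant_ge0 e f A B : 0 <= e -> 0 <= f -> 0 <= A -> 0 <= B ->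
  4 * A * B * (e ^+ 2 * A + f ^+ 2 * B) ^+ 2 <=
  (e ^+ 2 * ((A - B) ^+ 2 + 4 * A ^+ 2) + 4 * A * B * (f - e) ^+ 2) *
  (f ^+ 2 * ((A - B) ^+ 2 + 4 * B ^+ 2) + 4 * A * B * (f - e) ^+ 2).
Proof.
move=> e_ge0 f_ge0 A_ge0 B_ge0; rewrite -subr_ge0.
pose x0 := -4*f^+2*A*B + 3*e*f*B^+2 + e*f*A^+2.
pose y0 := -2*f^+2*A*B + 3*e*f*A*B - e*f*A^+2.
pose z0 := -f^+2*A*B - 2*e*f*A^+2 + 3*e^+2*A*B.
pose x1 := -2*f^+2*B + 4*f^+2*A - 2*e^+2*A.
pose y1 := -3*f^+2*B + 4*e*f*B - e^+2*A.
pose z1 := -f^+2*B + 4*e*f*A - 3*e^+2*A.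
pose w1 := -2*f^+2*B + 4*e^+2*B - 2*e^+2*A.
pose x2 := -f*B + 3*f*A - 2*e*A.
pose y2 := -2*f*B + 3*e*B - e*A.
have q0 := psd_form3_ge0 x0 y0 z0.
have q1 := psd_form4_ge0 x1 y1 z1 w1.
have q2 := psd_form2_ge0 x2 y2.
set Q0 := (X in 0 <= X) in q0; set Q1 := (X in 0 <= X) in q1.
set Q2 := (X in 0 <= X) in q2.
set D := (X in 0 <= X).
have certificate : 1728 * D = 16 * Q0 + 3 * (A * B) * Q1 + 96 * (A * B * e * f) * Q2.
  by rewrite /D /Q0 /Q1 /Q2 /x0 /y0 /z0 /x1 /y1 /z1 /w1 /x2 /y2; ring.
have AB := mulr_ge0 A_ge0 B_ge0; have ABef := mulr_ge0 (mulr_ge0 AB e_ge0) f_ge0.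
rewrite -(pmulr_rge0 _ (ltr0n _ 1728)) certificate.
by rewrite !addr_ge0 // !mulr_ge0 // ler0n.
Qed.

Lemma pair_quadratic_bound e f A B X Y : 0 <= e -> 0 <= f -> 0 < A -> 0 < B ->
  e ^+ 2 * A * (X * Y - X ^+ 2) + f ^+ 2 * B * (X * Y - Y ^+ 2) <=
  4^-1 * X ^+ 2 * e ^+ 2 * A * (1 - B / A) ^+ 2 + X ^+ 2 * B * (f - e) ^+ 2
  + 4^-1 * Y ^+ 2 * f ^+ 2 * B * (1 - A / B) ^+ 2 + Y ^+ 2 * A * (e - f) ^+ 2.
Proof.
move=> e_ge0 f_ge0 A_gt0 B_gt0; have A_ge0 := ltW A_gt0; have B_ge0 := ltW B_gt0.
set L1 := e ^+ 2 * ((A - B) ^+ 2 + 4 * A ^+ 2) + 4 * A * B * (f - e) ^+ 2.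
set L2 := f ^+ 2 * ((A - B) ^+ 2 + 4 * B ^+ 2) + 4 * A * B * (f - e) ^+ 2.
set m := 2 * A * B * (e ^+ 2 * A + f ^+ 2 * B).
have AB4_gt0 : 0 < 4 * A * B by rewrite !mulr_gt0.
have L_ge0 g h : 0 <= g ^+ 2 * ((A - B) ^+ 2 + 4 * h ^+ 2) + 4 * A * B * (f - e) ^+ 2.
  apply: addr_ge0; apply: mulr_ge0; rewrite ?sqr_ge0 ?(ltW AB4_gt0) //.
  exact: addr_ge0 (sqr_ge0 _) (mulr_ge0 (ler0n _ 4) (sqr_ge0 _)).
have L1_ge0 : 0 <= L1 := L_ge0 e A.
have L2_ge0 : 0 <= L2 := L_ge0 f B.
have disc : m ^+ 2 <= (B * L1) * (A * L2).
  have -> : (B * L1) * (A * L2) = A * B * (L1 * L2) by ring.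
  have -> : m ^+ 2 = A * B * (4 * A * B * (e ^+ 2 * A + f ^+ 2 * B) ^+ 2) by rewrite /m; ring.
  by rewrite ler_wpM2l ?mulr_ge0 ?pair_discriminant_ge0.
have form_ge0 := quadratic_form_ge0 X Y (mulr_ge0 B_ge0 L1_ge0) (mulr_ge0 A_ge0 L2_ge0) disc.
rewrite -subr_ge0 -(pmulr_rge0 _ AB4_gt0); apply: le_trans form_ge0 _.
rewrite le_eqVlt; apply/orP; left; apply/eqP.
by rewrite /m /L1 /L2; field; rewrite !gt_eqF.
Qed.

End PairQuadraticBound.

Section SignedPower.
Variable R : realType.
Implicit Types a b p w X Y : R.

Lemma powR_split_sqr X p : 0 <= X -> 2 <= p -> X `^ p = X `^ (p - 2) * X ^+ 2.
Proof.
move=> X_ge0 p_ge2; rewrite -powR_mulrn // -powRD ?subrK //.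
by apply/implyP => /eqP; lra.
Qed.

Lemma powR_sqr_half X p : 0 <= X -> 2 <= p -> X `^ p = (X `^ (p / 2)) ^+ 2.
Proof.
move=> X_ge0 p_ge2; rewrite expr2 -powRD; first by congr (_ `^ _); field.
by apply/implyP => /eqP; lra.
Qed.

(* Young's inequality with the conjugate exponents [p/2] and [p/(p-2)]. *)
Lemma young_powR X Y p : 0 <= X -> 0 <= Y -> 2 <= p ->
  p * X `^ (p - 2) * (X * Y) <= 2 * (X `^ (p / 2) * Y `^ (p / 2)) + (p - 2) * X `^ p.
Proof.
move=> X_ge0 Y_ge0 p_ge2; have [->|p_neq2] := eqVneq p 2.
  by rewrite subrr powRr0 mulr1 mul0r addr0 divff ?powRr1 //; lra.
have p_gt2 : 2 < p by rewrite lt_neqAle eq_sym p_neq2.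
have p2_gt0 : 0 < p - 2 by rewrite subr_gt0.
have p_gt0 : 0 < p by lra.
have := conjugate_powR (mulr_ge0 X_ge0 Y_ge0) (powR_ge0 X (p - 2))
  (divr_gt0 p_gt0 (ltr0Sn _ 1)) (divr_gt0 p_gt0 p2_gt0).
rewrite !invf_div (_ : 2 / p + (p - 2) / p = 1); last by field; lra.
rewrite powRM // -powRrM (_ : (p - 2) * (p / (p - 2)) = p); last by field; lra.
move=> /(_ erefl) young.
rewrite (_ : p * _ * _ = p * (X * Y * X `^ (p - 2))); last by ring.
apply: le_trans (ler_wpM2l (ltW p_gt0) young) _.
by rewrite le_eqVlt; apply/orP; left; apply/eqP; field; lra.
Qed.

Lemma signed_powR_increment_le a b p w : 2 <= p -> 0 <= w ->
  2^-1 * p * w * (`|a| `^ (p - 2) * a) * (b - a) <=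
  w * (`|a| `^ (p / 2) * `|b| `^ (p / 2) - (`|a| `^ (p / 2)) ^+ 2).
Proof.
move=> p_ge2 w_ge0; have p_ge0 : 0 <= p by lra.
have young := young_powR (normr_ge0 a) (normr_ge0 b) p_ge2.
have ab_le : p * `|a| `^ (p - 2) * (a * b) <= p * `|a| `^ (p - 2) * (`|a| * `|b|).
  by rewrite ler_wpM2l ?mulr_ge0 ?powR_ge0 // -normrM ler_norm.
rewrite -powR_sqr_half ?normr_ge0 //.
rewrite [`|a| `^ p]powR_split_sqr ?normr_ge0 // real_normK ?num_real // in young *.
set Z := `|a| `^ (p / 2) * _ in young *; set M := `|a| `^ (p - 2) in young ab_le *.
have key : p * M * (a * b) - p * (M * a ^+ 2) <= 2 * (Z - M * a ^+ 2) by lra.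
have half_w_ge0 : 0 <= w / 2 by rewrite divr_ge0.
have := ler_wpM2l half_w_ge0 key; lra.
Qed.

End SignedPower.

(* Contribution of the oriented edge (x, y), divided by omega x y, to the difference
   of the two sides: a = u x, e = eta x, A = exp (xi x), and b, f, B likewise at y. *)
Definition pair_defect (R : realType) (p a b e f A B : R) : R :=
  2^-1 * p * (e ^+ 2 * A) * (`|a| `^ (p - 2) * a) * (b - a)
  - 4^-1 * `|a| `^ p * e ^+ 2 * A * (1 - B / A) ^+ 2
  - `|a| `^ p * B * (f - e) ^+ 2.

Lemma pair_defect_sym_le0 (R : realType) (p a b e f A B : R) :
  2 <= p -> 0 <= e -> 0 <= f -> 0 < A -> 0 < B ->
  pair_defect p a b e f A B + pair_defect p b a f e B A <= 0.
Proof.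
move=> p_ge2 e_ge0 f_ge0 A_gt0 B_gt0.
have inc_a := signed_powR_increment_le a b p_ge2 (mulr_ge0 (sqr_ge0 e) (ltW A_gt0)).
have inc_b := signed_powR_increment_le b a p_ge2 (mulr_ge0 (sqr_ge0 f) (ltW B_gt0)).
have quad := pair_quadratic_bound (`|a| `^ (p / 2)) (`|b| `^ (p / 2)) e_ge0 f_ge0 A_gt0 B_gt0.
rewrite /pair_defect ![`|a| `^ p]powR_sqr_half ?normr_ge0 //.
rewrite ![`|b| `^ p]powR_sqr_half ?normr_ge0 //.
rewrite [`|b| `^ _ * `|a| `^ _]mulrC in inc_b.
lra.
Qed.

Lemma fsumr2_le0_sym (R : numDomainType) (T : choiceType) (D : set T) (F : T -> T -> R) :
  finite_set D -> (forall x y, D x -> D y -> F x y + F y x <= 0) ->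
  \sum_(x \in D) \sum_(y \in D) F x y <= 0.
Proof.
move=> D_fin F_le0; rewrite -(pmulr_rle0 _ (ltr0n R 2)) mulr_natl mulr2n.
rewrite {2}exchange_fsbig // -fsbig_split //.
under eq_fsbigr do rewrite -fsbig_split //.
by apply: fsumr_le0 => x Dx; apply: fsumr_le0 => y Dy; apply: F_le0.
Qed.

Section WeightedCaccioppoli.
Variables (R : realType) (T : countType) (omega : T -> T -> R).
Variables (mu V u eta xi : T -> R) (p : R).
Hypothesis mu_gt0 : forall x, 0 < mu x.
Hypothesis omega_ge0 : forall x y, 0 <= omega x y.
Hypothesis omega_sym : forall x y, omega x y = omega y x.
Hypothesis omega_lf : locally_finite omega.
Hypothesis u_solves : forall x, laplacian omega mu u x - V x * u x = 0.
Hypothesis eta_ge0 : forall x, 0 <= eta x.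
Hypothesis eta_fin : finite_set [set x | eta x != 0].
Hypothesis p_ge2 : 2 <= p.

Let S := [set x | eta x != 0].
(* Every term of the inequality vanishes outside this finite set. *)
Let D := S `|` \bigcup_(x in S) [set y | adj omega x y].

Let D_finite : finite_set D.
Proof. by rewrite finite_setU; split => //; apply: bigcup_finite. Qed.

Let supp_sub_D x : eta x != 0 -> D x.
Proof. by left. Qed.

Let nbhd_sub_D x y : eta x != 0 -> omega x y != 0 -> D y.
Proof.
by move=> ex wxy; right; exists x => //; rewrite /adj /= lt_neqAle eq_sym wxy omega_ge0.
Qed.

Let sum_over_D (f : T -> R) : (forall x, ~ D x -> f x = 0) ->
  \sum_(x \in [set: T]) f x = \sum_(x \in D) f x.
Proof. by move=> f0; apply/esym/fsbig_widen => // x [_ /f0]. Qed.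

Let grad x y := `|u x| `^ p * expR (xi y) * (eta y - eta x) ^+ 2 * omega x y.

Let defect x y :=
  omega x y * pair_defect p (u x) (u y) (eta x) (eta y) (expR (xi x)) (expR (xi y)).

Let energy x := `|u x| `^ p * eta x ^+ 2 * expR (xi x) *
  (V x * p * mu x - 2^-1 * \sum_(y \in [set: T]) omega x y * (1 - expR (xi y - xi x)) ^+ 2).

Let grad_out x y : ~ (D x /\ D y) -> grad x y = 0.
Proof.
move=> notD; have [w0|wxy] := eqVneq (omega x y) 0; first by rewrite /grad w0 mulr0.
have [ex0|ex] := eqVneq (eta x) 0; last first.
  by case: notD; split; [apply: supp_sub_D | apply: nbhd_sub_D wxy].
have [ey0|ey] := eqVneq (eta y) 0; first by rewrite /grad ex0 ey0 subrr expr2 !mulr0 mul0r.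
by case: notD; split; [apply: nbhd_sub_D ey _; rewrite omega_sym | apply: supp_sub_D].
Qed.

Let energy_eq x : 2^-1 * energy x = \sum_(y \in D) (defect x y + grad x y).
Proof.
have [ex0|ex] := eqVneq (eta x) 0.
  rewrite /energy ex0 expr2 !mulr0 !mul0r mulr0 fsbig1 // => y _.
  by rewrite /defect /grad /pair_defect ex0; ring.
have omega_out y : ~ D y -> omega x y = 0.
  by move=> Dy; apply/eqP; apply: contra_notT Dy; apply: nbhd_sub_D.
have lap : \sum_(y \in D) (u y - u x) * omega x y = mu x * (V x * u x).
  have /eqP := u_solves x; rewrite subr_eq0 /laplacian => /eqP <-.
  rewrite mulrA mulfV ?gt_eqF // mul1r; apply/esym/sum_over_D => y /omega_out ->.
  exact: mulr0.
rewrite /energy sum_over_D => [|y /omega_out ->]; last exact: mul0r.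
have split_sum : \sum_(y \in D) (defect x y + grad x y) =
    2^-1 * p * (eta x ^+ 2 * expR (xi x)) * (`|u x| `^ (p - 2) * u x)
      * \sum_(y \in D) (u y - u x) * omega x y
    + - (4^-1 * `|u x| `^ p * eta x ^+ 2 * expR (xi x))
      * \sum_(y \in D) omega x y * (1 - expR (xi y - xi x)) ^+ 2.
  rewrite !mulr_fsumr -fsbig_split //; apply: eq_fsbigr => y _ /=.
  by rewrite /defect /grad /pair_defect expRB; ring.
rewrite split_sum lap [`|u x| `^ p]powR_split_sqr ?normr_ge0 // real_normK ?num_real //.
by field.
Qed.

Lemma weighted_caccioppoli :
  2^-1 * \sum_(x \in [set: T]) energy x
  <= \sum_(x \in [set: T]) \sum_(y \in [set: T]) grad x y.
Proof.
have energy_out x : ~ D x -> energy x = 0.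
  move=> Dx; have /eqP ex0 : eta x == 0 by apply: contra_notT Dx; apply: supp_sub_D.
  by rewrite /energy ex0 expr2 !mulr0 !mul0r.
have grad_sum x : D x -> \sum_(y \in [set: T]) grad x y = \sum_(y \in D) grad x y.
  by move=> Dx; apply: sum_over_D => y Dy; apply: grad_out => -[].
rewrite (sum_over_D energy_out) mulr_fsumr; under eq_fsbigr do rewrite energy_eq.
rewrite (sum_over_D (f := fun x => \sum_(y \in [set: T]) grad x y)); last first.
  by move=> x Dx; apply: fsbig1 => y _; apply: grad_out => -[].
under [X in _ <= X]eq_fsbigr => x /set_mem Dx do rewrite grad_sum //.
under eq_fsbigr do rewrite fsbig_split //.
rewrite fsbig_split // gerDr; apply: fsumr2_le0_sym => // x y _ _.
by rewrite /defect omega_sym -mulrDr mulr_ge0_le0 // pair_defect_sym_le0 ?expR_gt0.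
Qed.

End WeightedCaccioppoli.

Theorem proposition4p3 (R : realType) (T : countType)
  (omega : T -> T -> R) (mu : T -> R) (V u eta xi : T -> R) (p : R) :
  weighted_graph omega mu ->
  infinite_set [set: T] ->
  connected_graph omega ->
  locally_finite omega ->
  (forall x, laplacian omega mu u x - V x * u x = 0) ->
  (forall x, 0 <= eta x) ->
  finite_set [set x | eta x != 0] ->
  (forall x y, adj omega x y ->
     0 <= (eta y ^+ 2 - eta x ^+ 2) * (expR (xi y) - expR (xi x))) ->
  2 <= p ->
  2^-1 * \sum_(x \in [set: T])
     (`|u x| `^ p * eta x ^+ 2 * expR (xi x) *
       (V x * p * mu x
        - 2^-1 * \sum_(y \in [set: T]) omega x y * (1 - expR (xi y - xi x)) ^+ 2))
  <= \sum_(x \in [set: T]) \sum_(y \in [set: T])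
       `|u x| `^ p * expR (xi y) * (eta y - eta x) ^+ 2 * omega x y.
Proof.
move=> [mu_gt0 [omega_ge0 [omega_sym _]]] _ _ omega_lf u_solves eta_ge0 eta_fin _ p_ge2.
exact: weighted_caccioppoli.
Qed.
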